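(* Let $(E,\mathcal{D},\rho)$ and $(E,\mathcal{D},\phi)$ be U-matroids on the same lattice such that $\phi$ dominates $\rho$ (i.e., $\phi(S)\ge\rho(S)$ for all $S\in\mathcal{D}$), and let $a\in E$ with $\{a\}\notin\mathcal{D}$. Then the generous atom extension $\phi_a$ of $\phi$ to $\mathcal{D}[a]$ dominates every lattice extension of $\rho$ to $\mathcal{D}[a]$; that is, if $(E,\mathcal{D}[a],\rho')$ is a U-matroid with $\rho'|_\mathcal{D}=\rho$, then $\phi_a(S)\ge\rho'(S)$ for all $S\in\mathcal{D}[a]$.
   Context: An accessible distributive lattice on a finite set $E$ is a family $\mathcal{D}\subseteq 2^E$ containing $\emptyset$ and $E$, closed under union and intersection, such that every nonempty $A\in\mathcal{D}$ contains some $x$ with $A\setminus\{x\}\in\mathcal{D}$. A U-matroid is a triple $(E,\mathcal{D},\rho)$ with $\mathcal{D}$ an accessible distributive lattice and $\rho:\mathcal{D}\to\mathbb{N}$ satisfying $\rho(\emptyset)=0$; $\rho(A)\le\rho(B)$ whenever $A\subseteq B$; $\rho(A)+\rho(B)\ge\rho(A\cup B)+\rho(A\cap B)$; and $\rho(A\cup\{e\})-\rho(A)\le1$ whenever $A,A\cup\{e\}\in\mathcal{D}$. For $S\subseteq E$, $\sup_\mathcal{D}(S)=\bigcap\{B\in\mathcal{D}:B\supseteq S\}$. For $a\in E$ with $\{a\}\notin\mathcal{D}$, let $\mathcal{D}[a]=\mathcal{D}\cup\{S\cup\{a\}:S\in\mathcal{D}\}$. The generous atom extension $\phi_a:\mathcal{D}[a]\to\mathbb{N}$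 of $\phi$ is: $\phi_a(S)=\phi(S)$ if $S\in\mathcal{D}$; if $S\notin\mathcal{D}$ (so $S\setminus\{a\}\in\mathcal{D}$), $\phi_a(S)=\phi(S\setminus\{a\})$ when $\phi(S\setminus\{a\})=\phi(\sup_\mathcal{D}(S))$, and $\phi_a(S)=\phi(S\setminus\{a\})+1$ otherwise. *)

From mathcomp Require Import all_boot.
Set Implicit Arguments. Unset Strict Implicit. Unset Printing Implicit Defensive.

Section UMatroid.
Variable E : finType.

Definition accessible_distr_lattice (D : {set {set E}}) : Prop :=
  [/\ set0 \in D, [set: E] \in D,
      (forall A B, A \in D -> B \in D -> A :|: B \in D),
      (forall A B, A \in D -> B \in D -> A :&: B \in D) &
      (forall A, A \in D -> A != set0 -> exists2 x, x \in A & A :\ x \in D)].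

(* U-matroid (E, D, rho); rho is a total function on subsets but only its
   values on D matter. *)
Definition Umatroid (D : {set {set E}}) (rho : {set E} -> nat) : Prop :=
  [/\ accessible_distr_lattice D,
      rho set0 = 0,
      (forall A B, A \in D -> B \in D -> A \subset B -> rho A <= rho B),
      (forall A B, A \in D -> B \in D ->
         rho (A :|: B) + rho (A :&: B) <= rho A + rho B) &
      (forall A e, A \in D -> A :|: [set e] \in D ->
         rho (A :|: [set e]) <= rho A + 1)].

Definition supD (D : {set {set E}}) (S : {set E}) : {set E} :=
  \bigcap_(B in D | S \subset B) B.

Definition extD (D : {set {set E}}) (a : E) : {set {set E}} :=
  D :|: [set S :|: [set a] | S in D].

Definition generous (D : {set {set E}}) (phi : {set E} -> nat) (a : E)
  (S : {set E}) : nat :=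
  if S \in D then phi S
  else if phi (S :\ a) == phi (supD D S) then phi (S :\ a)
       else (phi (S :\ a)).+1.

End UMatroid.

(* If S lies in D, then rho' S = rho S <= phi S.  Otherwise S = T + a with
   T = S \ a in D, and the two branches of the generous extension are bounded
   by the two U-matroid axioms of rho': when phi T = phi (sup S), monotonicity
   gives rho' S <= rho' (sup S) = rho (sup S) <= phi (sup S) = phi T; otherwise
   unit increase gives rho' S <= rho' T + 1 = rho T + 1 <= phi T + 1. *)

From mathcomp Require Import all_boot.

Set Implicit Arguments.
Unset Strict Implicit.
Unset Printing Implicit Defensive.

Section SupD.

Variables (E : finType) (D : {set {set E}}).

Lemma sub_supD (S : {set E}) : S \subset supD D S.
Proof. by apply/bigcapsP => B /andP[]. Qed.

Lemma supD_in (S : {set E}) :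
  [set: E] \in D -> (forall A B, A \in D -> B \in D -> A :&: B \in D) ->
  supD D S \in D.
Proof.
move=> DT DI; apply: (big_ind (fun X => X \in D)) => //.
by move=> B /andP[].
Qed.

End SupD.

Section AtomExtension.

Variables (E : finType) (D : {set {set E}}) (a : E).

Lemma extD_l (S : {set E}) : S \in D -> S \in extD D a.
Proof. by rewrite inE => ->. Qed.

Lemma extD_new (S : {set E}) :
  S \in extD D a -> S \notin D -> (S :\ a \in D) && (a \in S).
Proof.
rewrite inE => /orP[-> // | /imsetP[T TD ->]] STD.
have aT : a \notin T.
  by apply: contra STD => aT; rewrite (setUidPl (_ : [set a] \subset T)) ?sub1set.
have -> : (T :|: [set a]) :\ a = T.
  by rewrite setDUl setDv setU0; apply/setDidPl; rewrite disjoint_sym disjoints1.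
by rewrite TD !inE eqxx orbT.
Qed.

Lemma setD1U1 (S : {set E}) : a \in S -> S :\ a :|: [set a] = S.
Proof. by move=> aS; rewrite setUC setD1K. Qed.

Variable phi : {set E} -> nat.
Hypothesis DT : [set: E] \in D.
Hypothesis DI : forall A B, A \in D -> B \in D -> A :&: B \in D.

Lemma generous_ge (psi : {set E} -> nat) :
  (forall S, S \in D -> psi S <= phi S) ->
  (forall A B, A \in extD D a -> B \in extD D a -> A \subset B ->
     psi A <= psi B) ->
  (forall A, A \in extD D a -> A :|: [set a] \in extD D a ->
     psi (A :|: [set a]) <= psi A + 1) ->
  forall S, S \in extD D a -> psi S <= generous D phi a S.
Proof.
move=> psi_le_phi psi_mono psi_unit S SE; rewrite /generous.
have [SD | SnD] := boolP (S \in D); first exact: psi_le_phi.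
have /andP[TD aS] := extD_new SE SnD.
have supSD := supD_in S DT DI.
case: eqP => [-> | _].
  apply: leq_trans (psi_le_phi _ supSD).
  exact: psi_mono (extD_l supSD) (sub_supD D S).
have := psi_unit _ (extD_l TD); rewrite setD1U1 // => /(_ SE) /leq_trans-> //.
by rewrite addn1 ltnS psi_le_phi.
Qed.

End AtomExtension.

Theorem proposition4p11 (E : finType) (D : {set {set E}})
  (rho phi rho' : {set E} -> nat) (a : E) :
  Umatroid D rho -> Umatroid D phi ->
  (forall S, S \in D -> rho S <= phi S) ->
  [set a] \notin D ->
  Umatroid (extD D a) rho' ->
  (forall S, S \in D -> rho' S = rho S) ->
  forall S, S \in extD D a -> rho' S <= generous D phi a S.
Proof.
move=> [[_ DT _ DI _] _ _ _ _] _ rho_le_phi _ [_ _ rho'_mono _ rho'_unit] ext.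
apply: (generous_ge DT DI) => [S SD | // | A]; last exact: rho'_unit.
by rewrite ext ?rho_le_phi.
Qed.
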